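(* Let $\epsilon>0$, $\delta\ge0$, $n\ge1$, let $\mathscr X$ be any set, and let $T:\mathscr X^n\to\mathbb{Z}$ satisfy $\sup|T(X)-T(X')|=1$, where the supremum is over all pairs $(X,X')\in\mathscr X^n\times\mathscr X^n$ with Hamming distance $\delta(X,X')=1$. Then the set of distributions $\big\{\mathrm{Tulap}\big(T(X),b=e^{-\epsilon},\tfrac{2\delta b}{1-b+2\delta b}\big)\ \big|\ X\in\mathscr X^n\big\}$ satisfies $(\epsilon,\delta)$-differential privacy.
   Context: The Hamming distance on $\mathscr X^n$ is $\delta(X,X')=\#\{i: X_i\ne X'_i\}$. A family $\{P_X: X\in\mathscr X^n\}$ of probability measures on a measurable space $(\mathscr Y,\mathscr F)$ satisfies $(\epsilon,\delta)$-differential privacy if for every $B\in\mathscr F$ and all $X,X'\in\mathscr X^n$ with $\delta(X,X')=1$, $P_X(B)\le e^\epsilon P_{X'}(B)+\delta$. Nearest integer function: $[t]$ is the integer nearest to $t$, with $[z+1/2]$ ($z\in\mathbb{Z}$) defined as the nearest even integer. Tulap distribution: for $m\in\mathbb{R}$, $b\in(0,1)$, $q\in[0,1)$, $N_0\sim\mathrm{Tulap}(m,b,0)$ has cdf $F_{N_0}(x)=\frac{b^{-[x-m]}}{1+b}\big(b+(x-m-[x-m]+\tfrac12)(1-b)\big)$ for $x\leq [m]$ and $F_{N_0}(x)=1-\frac{b^{[x-m]}}{1+b}\big(b+([x-m]-(x-m)+\tfrac12)(1-b)\big)$ for $x>[m]$; and $N\sim \mathrm{Tulap}(m,b,q)$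 has cdf $F_N(x)=\frac{F_{N_0}(x)-q/2}{1-q}\,I\{q/2\leq F_{N_0}(x)\leq 1-q/2\}+I\{F_{N_0}(x)>1-q/2\}$. *)

From HB Require Import structures.
From mathcomp Require Import all_boot all_order all_algebra.
From mathcomp Require Import all_classical all_reals all_analysis.
Set Implicit Arguments. Unset Strict Implicit. Unset Printing Implicit Defensive.
Import Order.TTheory GRing.Theory Num.Theory.
Local Open Scope ring_scope.

Definition nearest_int {R : realType} (t : R) : int :=
  let f := Num.floor t in
  let fr := t - f%:~R in
  if fr < 2^-1 then f
  else if 2^-1 < fr then f + 1
  else (if ~~ odd `|f|%N then f else f + 1).

Definition tulap0_cdf {R : realType} (m b x : R) : R :=
  let k := nearest_int (x - m) in
  if x <= (nearest_int m)%:~R then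
    b ^ (- k) / (1 + b) * (b + (x - m - k%:~R + 2^-1) * (1 - b))
  else
    1 - b ^ k / (1 + b) * (b + (k%:~R - (x - m) + 2^-1) * (1 - b)).

Definition tulap_cdf {R : realType} (m b q x : R) : R :=
  let F0 := tulap0_cdf m b x in
  (if (q / 2 <= F0) && (F0 <= 1 - q / 2) then (F0 - q / 2) / (1 - q) else 0)
  + (if F0 > 1 - q / 2 then 1 else 0).

Definition hamming {Xs : Type} {n : nat} (X X' : 'I_n -> Xs) : nat :=
  #|[pred i : 'I_n | ~~ `[< X i = X' i >]]|.

Definition diff_private {R : realType} {Xs : Type} {n : nat}
    (eps delta : R) (P : ('I_n -> Xs) -> probability R R) : Prop :=
  forall (B : set R), measurable B ->
  forall X X' : 'I_n -> Xs, hamming X X' = 1%N ->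
    (P X B <= (expR eps)%:E * P X' B + delta%:E)%E.

From HB Require Import structures.
From mathcomp Require Import all_boot all_order all_algebra.
From mathcomp Require Import all_classical all_reals all_analysis.
From mathcomp Require Import ring lra zify.
Import Order.TTheory GRing.Theory Num.Theory.
Import numFieldTopology.Exports.
Local Open Scope classical_set_scope.
Local Open Scope ring_scope.
Set Implicit Arguments. Unset Strict Implicit.

(* Let mu = P X and nu = P X' for neighbouring databases, with cdfs F and G;
   the Tulap centres m = T X and m' = T X' are integers with |m - m'| <= 1.
   The bound mu A <= e^eps nu A + delta holds on all Borel sets as soon as some
   nondecreasing right-continuous Phi with values in [0, delta] makes
   e^eps G + Phi - F nondecreasing: the Lebesgue-Stieltjes measures lam of that
   function and rho of Phi then satisfy mu + lam = e^eps nu + rho, and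
   rho <= delta.
   For the untruncated cdf L = Tulap(0, b, 0) (b = e^-eps), L x <= b^-1 L (x - 1)
   and x |-> b^-1 L (x - 1) - L x is nondecreasing.  Truncation by q acts on L
   as the affine map v |-> (v - q/2) / (1 - q) followed by clamping to [0, 1];
   the affine map turns the factor b^-1 into an additive error
   (b^-1 - 1) q / (2 (1 - q)), which is exactly delta.  Hence Phi = min(F, delta)
   works for m' = m + 1, Phi = 0 for m' = m, and m' = m - 1 follows from the
   symmetry x |-> -x. *)

Section DPWitness.
Variable R : realFieldType.

Definition dp_witness (B d : R) (F G Phi : R -> R) :=
  [/\ {homo Phi : x y / x <= y}, forall x, 0 <= Phi x <= d
    & {homo (fun x => B * G x + Phi x - F x) : x y / x <= y}].

Lemma dp_witness0 (B d : R) (F : R -> R) : 1 <= B -> 0 <= d ->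
  {homo F : x y / x <= y} -> dp_witness B d F F (fun=> 0).
Proof.
move=> B1 d0 Fhomo; split=> [//|x|x y xy]; first by rewrite lexx.
have Fxy := Fhomo x y xy.
have : 0 <= (B - 1) * (F y - F x) by apply: mulr_ge0; lra.
by rewrite mulrBl mulrBr !mul1r; lra.
Qed.

Lemma dp_witness_reflect (B d : R) (F G Phi : R -> R) :
  dp_witness B d (fun x => 1 - F (- x)) (fun x => 1 - G (- x)) Phi ->
  dp_witness B d F G (fun x => d - Phi (- x)).
Proof.
move=> [Phi_homo Phi_itv W_homo]; split=> [x y xy|x|x y xy].
- by rewrite lerD2l lerN2 Phi_homo // lerN2.
- by have /andP[? ?] := Phi_itv (- x); apply/andP; split; lra.
- have := W_homo (- y) (- x); rewrite lerN2 !opprK => /(_ xy).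
  by rewrite !mulrBr !mulr1; lra.
Qed.

End DPWitness.

Section ProbabilityCdf.
Context (R : realType) (mu : probability R R) (F : R -> R).
Hypothesis muF : forall x, mu `]-oo, x]%classic = (F x)%:E.

Let idTR : R -> R := idfun.
#[local] HB.instance Definition _ :=
  @isMeasurableFun.Build _ _ _ _ idTR (@measurable_id _ R setT).

Lemma probability_cdf_right_continuous : right_continuous F.
Proof.
have -> : F = fun r => fine (cdf (idTR : {RV mu >-> R}) r).
  by apply/funext => r; rewrite /cdf /distribution /pushforward /= preimage_id muF.
move=> a; apply: fine_cvg.
by rewrite fineK ?fin_num_measure//; exact: cdf_right_continuous.
Qed.

Lemma probability_itv_ocE (a c : R) : a <= c ->
  mu `]a, c]%classic = ((F c)%:E - (F a)%:E)%E.
Proof.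
move=> ac; have -> : `]a, c]%classic = `]-oo, c] `\` `]-oo, a].
  by rewrite -[RHS]setCK setCD setCitvl setUC -[LHS]setCK setCitv.
rewrite measureD ?setIidr//.
- by rewrite [X in (X - _)%E](muF c) [X in (_ - X)%E](muF a).
- exact: subset_itvl.
- by rewrite -ge0_fin_numE// fin_num_measure.
Qed.

End ProbabilityCdf.

Section StieltjesOnR.
Context (R : realType).

(* [lebesgue_stieltjes_measure] lives on the copy [measurableTypeR R] of [R];
   [stieltjes] is the same measure on [R], where [probability R R] lives. *)
Definition stieltjes (f : cumulative R R) : set R -> \bar R :=
  lebesgue_stieltjes_measure f.

HB.instance Definition _ (f : cumulative R R) :=
  isMeasure.Build _ _ _ (stieltjes f) (measure0 (lebesgue_stieltjes_measure f))
    (measure_ge0 (lebesgue_stieltjes_measure f))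
    (@measure_semi_sigma_additive _ _ _ (lebesgue_stieltjes_measure f)).

Lemma stieltjes_itv_ocE (f : cumulative R R) (a c : R) : a <= c ->
  stieltjes f `]a, c]%classic = ((f c)%:E - (f a)%:E)%E.
Proof.
move=> ac; rewrite /stieltjes /lebesgue_stieltjes_measure /measure_extension/=.
by rewrite measurable_mu_extE/= ?wlength_itv_bnd//; exact: is_ocitv.
Qed.

Lemma bigcup_itv_oc_sym : \bigcup_n `](- n%:R), n%:R]%classic = [set: R].
Proof.
rewrite -subTset => x _ /=; exists (Num.trunc `|x|).+1 => //=; rewrite in_itv /=.
have := truncnS_gt `|x|; have := ler_norm x; have := ler_norm (- x).
by rewrite normrN => ? ? ?; apply/andP; split; lra.
Qed.

End StieltjesOnR.

Section DPOfWitness.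
Context (R : realType) (mu nu : probability R R) (F G Phi : R -> R) (B d : R).
Hypotheses (B_ge0 : 0 <= B) (muF : forall x, mu `]-oo, x]%classic = (F x)%:E)
  (nuG : forall x, nu `]-oo, x]%classic = (G x)%:E).
Hypotheses (Phi_rc : right_continuous Phi) (Phi_witness : dp_witness B d F G Phi).

Definition witness_gap x := B * G x + Phi x - F x.
(* A constant to carry the [cumulative] instance of the variable [Phi]. *)
Definition witness_phi x := Phi x.

Let witness_gap_homo : {homo witness_gap : x y / x <= y}.
Proof. by case: Phi_witness. Qed.

Let witness_gap_rc : right_continuous witness_gap.
Proof.
move=> x; apply: cvgB; last exact: probability_cdf_right_continuous muF x.
apply: cvgD => //; apply: cvgMr; exact: probability_cdf_right_continuous nuG x.
Qed.

Let witness_phi_homo : {homo witness_phi : x y / x <= y}.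
Proof. by case: Phi_witness. Qed.

HB.instance Definition _ :=
  isCumulative.Build R _ R witness_gap witness_gap_homo witness_gap_rc.
HB.instance Definition _ :=
  isCumulative.Build R _ R witness_phi witness_phi_homo Phi_rc.

Let lam := stieltjes witness_gap.
Let rho := stieltjes witness_phi.

Let lam_itv_ocE (a c : R) : a <= c ->
  lam `]a, c]%classic = ((witness_gap c)%:E - (witness_gap a)%:E)%E.
Proof. exact: stieltjes_itv_ocE. Qed.

Let rho_itv_ocE (a c : R) : a <= c ->
  rho `]a, c]%classic = ((Phi c)%:E - (Phi a)%:E)%E.
Proof. exact: stieltjes_itv_ocE. Qed.

Let mu_lam := measure_add mu lam.
Let Bnu_rho := measure_add (mscale (NngNum B_ge0) nu) rho.

Let mu_lam_eq (A : set R) : measurable A -> mu_lam A = Bnu_rho A.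
Proof.
have itv_eq X : ocitv X -> mu_lam X = Bnu_rho X.
  move=> [[a c] _ <-]; rewrite /mu_lam /Bnu_rho !measure_addE.
  have [ac|ca] := leP a c; last first.
    by rewrite set_itv_ge ?bnd_simp -?leNgt ?ltW // /mscale /= !measure0 ?mule0 ?adde0.
  change (mu `]a, c]%classic + lam `]a, c]%classic
    = B%:E * nu `]a, c]%classic + rho `]a, c]%classic)%E.
  rewrite lam_itv_ocE // rho_itv_ocE // (probability_itv_ocE muF) //.
  rewrite (probability_itv_ocE nuG) // -!EFinB -EFinM -!EFinD; congr EFin.
  by rewrite /witness_gap; ring.
apply: (measure_unique (@ocitv R) (fun k : nat => `](- k%:R), k%:R]%classic)) => //.
- exact: ocitvI.
- by move=> k; exact: is_ocitv.
- exact: bigcup_itv_oc_sym.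
- move=> k; have k_ge0 : (0 : R) <= k%:R by [].
  change (mu_lam `](- k%:R)%R, k%:R%R]%classic < +oo)%E.
  rewrite /mu_lam measure_addE.
  change (mu `](- k%:R)%R, k%:R%R]%classic + lam `](- k%:R)%R, k%:R%R]%classic < +oo)%E.
  by rewrite lam_itv_ocE ?(probability_itv_ocE muF) -?EFinB -?EFinD ?ltry //; lra.
Qed.

Let rho_le (A : set R) : measurable A -> (rho A <= d%:E)%E.
Proof.
move=> mA; apply: (@le_trans _ _ (rho setT)); first by apply: le_measure; rewrite ?inE.
have rho_cvg : rho `](- n%:R), n%:R]%classic @[n --> \oo] --> rho setT.
  rewrite -bigcup_itv_oc_sym; apply: nondecreasing_cvg_mu => //.
    exact: bigcup_measurable.
  move=> n m nm; have : (n%:R : R) <= m%:R by rewrite ler_nat.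
  by move=> ?; apply/subsetPset/subset_itv; rewrite bnd_simp; lra.
rewrite -(cvg_lim _ rho_cvg) //; apply: lime_le; first by apply/cvg_ex; exists (rho setT).
apply: nearW => n; have n_ge0 : (0 : R) <= n%:R by [].
rewrite rho_itv_ocE; last lra.
case: Phi_witness => _ Phi_itv _.
have /andP[? _] := Phi_itv (- n%:R); have /andP[_ ?] := Phi_itv n%:R.
by rewrite -EFinB lee_fin; lra.
Qed.

Lemma le_dp_of_witness (A : set R) : measurable A -> (mu A <= B%:E * nu A + d%:E)%E.
Proof.
move=> mA; apply: (@le_trans _ _ (mu_lam A)); first by rewrite /mu_lam measure_addE leeDl.
by rewrite mu_lam_eq // /Bnu_rho measure_addE leeD2l // rho_le.
Qed.

End DPOfWitness.

Lemma right_continuous_comp (R : realType) (f g : R -> R) :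
  continuous g -> right_continuous f -> right_continuous (g \o f).
Proof. by move=> gc fc x; apply: continuous_cvg; [exact: gc|exact: fc]. Qed.

Lemma continuous_minr (R : realType) (c : R) : continuous (fun x : R => Num.min x c).
Proof.
by move=> x; apply: (@min_fun_continuous _ R R id (cst c)); [move=> ?|exact: cst_continuous].
Qed.

Section Clamp.
Variable R : realFieldType.

Definition clamp01 (y : R) : R := if y < 0 then 0 else if 1 < y then 1 else y.

Variant clamp01_spec (y : R) : R -> Type :=
  | Clamp01Neg of y < 0 : clamp01_spec y 0
  | Clamp01Unit of 0 <= y <= 1 : clamp01_spec y y
  | Clamp01Big of 1 < y : clamp01_spec y 1.

Lemma clamp01P (y : R) : clamp01_spec y (clamp01 y).
Proof.
rewrite /clamp01; case: ltP => [|y0]; first exact: Clamp01Neg.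
by case: ltP => [|y1]; [exact: Clamp01Big|apply: Clamp01Unit; rewrite y0 y1].
Qed.

Lemma clamp01_itv (y : R) : 0 <= clamp01 y <= 1.
Proof. by case: clamp01P => [_|y01|_]; rewrite ?lexx ?ler01. Qed.

Lemma clamp01_homo : {homo clamp01 : x y / x <= y}.
Proof.
by move=> x y xy; case: clamp01P => [?|/andP[? ?]|?]; case: clamp01P => [?|/andP[? ?]|?]; lra.
Qed.

Lemma clamp01_lipschitz (x y : R) : x <= y -> clamp01 y - clamp01 x <= y - x.
Proof.
by move=> xy; case: clamp01P => [?|/andP[? ?]|?]; case: clamp01P => [?|/andP[? ?]|?]; lra.
Qed.

Lemma clamp01_le (y c : R) : 0 <= c -> y <= c -> clamp01 y <= c.
Proof. by move=> c0 yc; case: clamp01P => [?|/andP[? ?]|?]; lra. Qed.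

Lemma clamp01_gt1 (y : R) : 1 < y -> clamp01 y = 1.
Proof. by case: clamp01P => [?|/andP[? ?]|] //; lra. Qed.

Lemma clamp01C (y : R) : clamp01 (1 - y) = 1 - clamp01 y.
Proof.
by case: (clamp01P y) => [?|/andP[? ?]|?]; case: clamp01P => [?|/andP[? ?]|?]; lra.
Qed.

Lemma clamp01_min_homo (B d s t s' t' : R) : 1 <= B -> 0 <= d ->
  s <= t -> s' <= t' -> s <= s' -> s' <= B * s + d -> t' - s' <= B * (t - s) ->
  B * clamp01 s + Num.min (clamp01 s') d - clamp01 s' <=
  B * clamp01 t + Num.min (clamp01 t') d - clamp01 t'.
Proof.
move=> B1 d0 st st' ss' s'_le diff_le.
have t'_le : t' <= B * t + d by move: diff_le; rewrite mulrBr; lra.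
(* With m c := max (c - d) 0 the claim reads m (clamp01 t') - m (clamp01 s')
   <= B * (clamp01 t - clamp01 s); split on where s and t lie w.r.t. [0, 1]. *)
pose m c := Num.max (c - d) 0.
have minE c : Num.min c d - c = - m c.
  by rewrite /m minElt maxElt; case: ltP => ?; case: ltP => ?; lra.
have m_homo c1 c2 : c1 <= c2 -> m c1 <= m c2.
  by rewrite /m !maxElt; case: ltP => ?; case: ltP => ?; lra.
have m_lipschitz c1 c2 : c1 <= c2 -> m c2 - m c1 <= c2 - c1.
  by rewrite /m !maxElt; case: ltP => ?; case: ltP => ?; lra.
have m_le c e : 0 <= e -> c <= e + d -> m c <= e.
  by rewrite /m maxElt; case: ltP => ?; lra.
rewrite -!addrA !minE.
have := clamp01_lipschitz st'; have := clamp01_homo ss'.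
have /andP[? ?] := clamp01_itv s'; have /andP[? ?] := clamp01_itv t'.
case: (clamp01P s) => [s_lt0|/andP[s0 s1]|s_gt1] cs_le cst'_le;
  case: (clamp01P t) => [t_lt0|/andP[t0 t1]|t_gt1]; try lra.
- have Bs_le0 : B * s <= 0 by apply: mulr_ge0_le0; lra.
  have Bt_le0 : B * t <= 0 by apply: mulr_ge0_le0; lra.
  have : m (clamp01 s') <= 0 by apply/m_le/clamp01_le => //; lra.
  have : m (clamp01 t') <= 0 by apply/m_le/clamp01_le => //; lra.
  by rewrite !mulr0 /m !maxElt; do 2 case: ltP => ?; lra.
- have Bs_le0 : B * s <= 0 by apply: mulr_ge0_le0; lra.
  have Bt_ge0 : 0 <= B * t by apply: mulr_ge0; lra.
  have : m (clamp01 s') <= 0 by apply/m_le/clamp01_le => //; lra.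
  have : m (clamp01 t') <= B * t by apply/m_le/clamp01_le => //; lra.
  by rewrite mulr0 /m !maxElt; do 2 case: ltP => ?; lra.
- have Bs_le0 : B * s <= 0 by apply: mulr_ge0_le0; lra.
  have : m (clamp01 s') <= 0 by apply/m_le/clamp01_le => //; lra.
  have : m (clamp01 t') <= 1 by apply: m_le; lra.
  by rewrite mulr0 mulr1 /m !maxElt; do 2 case: ltP => ?; lra.
- have := m_lipschitz _ _ (clamp01_homo st').
  by move: diff_le; rewrite mulrBr; lra.
- have : (B - 1) * (1 - s) >= 0 by apply: mulr_ge0; lra.
  have := m_lipschitz _ _ (clamp01_homo st').
  by rewrite mulr1 mulrBl mulrBr; lra.
- rewrite !clamp01_gt1; lra.
Qed.

End Clamp.

Section NearestInt.
Variable R : realType.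

Definition round_cell (x : R) (k : int) := k%:~R - 2^-1 <= x <= k%:~R + 2^-1.

Lemma nearest_int_cell (x : R) : round_cell x (nearest_int x).
Proof.
rewrite /round_cell /nearest_int; have := floor_le x; have := floorD1_gt x.
rewrite intrD => ? ?.
case: ifP => [|lt_half]; first by move=> ?; apply/andP; split; lra.
case: ifP => [|gt_half]; first by move=> ?; rewrite intrD; apply/andP; split; lra.
have tie : x - (Num.floor x)%:~R = 2^-1.
  by apply/eqP; rewrite eq_le !leNgt lt_half gt_half.
by case: ifP => _; rewrite ?intrD; apply/andP; split; lra.
Qed.

Lemma nearest_int_intr (z : int) : nearest_int (z%:~R : R) = z.
Proof. by rewrite /nearest_int intrKfloor subrr ifT //; lra. Qed.

Lemma round_cell_cases (x : R) (k j : int) : round_cell x k -> round_cell x j ->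
  [\/ j = k, j = k + 1 /\ x = k%:~R + 2^-1 | k = j + 1 /\ x = j%:~R + 2^-1].
Proof.
move=> /andP[k1 k2] /andP[j1 j2].
have : k%:~R <= (j + 1)%:~R :> R by rewrite intrD; lra.
have : j%:~R <= (k + 1)%:~R :> R by rewrite intrD; lra.
rewrite !ler_int => jk kj.
have [->|ne] := eqVneq j k; first by constructor 1.
have [jk1|ne'] := eqVneq j (k + 1).
  by constructor 2; split => //; move: j1; rewrite jk1 intrD; lra.
have kj1 : k = j + 1 by lia.
by constructor 3; split => //; move: k1; rewrite kj1 intrD; lra.
Qed.

Lemma round_cell0 (k : int) : round_cell 0 k -> k = 0.
Proof.
move=> /andP[k1 k2].
have : k%:~R < 1%:~R :> R by lra.
have : (-1)%:~R < k%:~R :> R by rewrite mulrNz; lra.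
by rewrite !ltr_int; lia.
Qed.

Lemma round_cellN (x : R) k : round_cell x k -> round_cell (- x) (- k).
Proof. by rewrite /round_cell intrN => /andP[? ?]; apply/andP; split; lra. Qed.

Lemma round_cellB1 (x : R) k : round_cell x k -> round_cell (x - 1) (k - 1).
Proof. by rewrite /round_cell intrB => /andP[? ?]; apply/andP; split; lra. Qed.

End NearestInt.

Section TulapCdf.
Variables (R : realType) (b : R).
Hypotheses (b_gt0 : 0 < b) (b_lt1 : b < 1).

Local Notation L := (tulap0_cdf 0 b).

(* [lra] does not see section hypotheses, so they are reintroduced first. *)
Local Ltac b_bounds := have ? := b_gt0; have ? := b_lt1.

(* The two branches of [tulap0_cdf 0 b], with [nearest_int x] replaced by any
   [k] such that [round_cell x k]. *)
Definition tulap_lower (x : R) (k : int) :=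
  b ^ (- k) / (1 + b) * (b + (x - k%:~R + 2^-1) * (1 - b)).
Definition tulap_upper (x : R) (k : int) :=
  b ^ k / (1 + b) * (b + (k%:~R - x + 2^-1) * (1 - b)).

Let b_neq0 : b != 0. Proof. exact: lt0r_neq0. Qed.
Let b1_neq0 : 1 + b != 0. Proof. by apply: lt0r_neq0; b_bounds; lra. Qed.

Let expzS (k : int) : b ^ (k + 1) = b ^ k * b.
Proof. by rewrite expfzDr // expr1z. Qed.

Lemma tulap_lower_tie (k : int) :
  tulap_lower (k%:~R + 2^-1) k = tulap_lower (k%:~R + 2^-1) (k + 1).
Proof.
rewrite /tulap_lower.
have -> : b ^ (- k) = b ^ (- (k + 1)) * b by rewrite -expzS; congr (_ ^ _); ring.
by rewrite intrD; field.
Qed.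

Lemma tulap_upper_tie (k : int) :
  tulap_upper (k%:~R + 2^-1) k = tulap_upper (k%:~R + 2^-1) (k + 1).
Proof. by rewrite /tulap_upper expzS intrD; field. Qed.

Lemma tulap_lower_cell (x : R) k j : round_cell x k -> round_cell x j ->
  tulap_lower x k = tulap_lower x j.
Proof.
move=> xk xj; case: (round_cell_cases xk xj) => [->|[-> ->]|[-> ->]] //.
- exact: tulap_lower_tie.
- exact/esym/tulap_lower_tie.
Qed.

Lemma tulap_upper_cell (x : R) k j : round_cell x k -> round_cell x j ->
  tulap_upper x k = tulap_upper x j.
Proof.
move=> xk xj; case: (round_cell_cases xk xj) => [->|[-> ->]|[-> ->]] //.
- exact: tulap_upper_tie.
- exact/esym/tulap_upper_tie.
Qed.

Lemma tulap0_cdf_shift (m : int) (x : R) : tulap0_cdf m%:~R b x = L (x - m%:~R).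
Proof.
by rewrite /tulap0_cdf nearest_int_intr -[0 : R]/(0%:~R) nearest_int_intr subr_le0 !subr0.
Qed.

Lemma tulap0_cdfE_le0 (x : R) k : round_cell x k -> x <= 0 -> L x = tulap_lower x k.
Proof.
rewrite /tulap0_cdf -[0 : R]/(0%:~R) nearest_int_intr subr0 => xk -> /=.
exact/tulap_lower_cell/xk/nearest_int_cell.
Qed.

Lemma tulap0_cdfE_ge0 (x : R) k : round_cell x k -> 0 <= x -> L x = 1 - tulap_upper x k.
Proof.
rewrite /tulap0_cdf -[0 : R]/(0%:~R) nearest_int_intr subr0 => xk x_ge0.
b_bounds; case: ifP => x_le0; last by congr (_ - _); exact/tulap_upper_cell/xk/nearest_int_cell.
have x0 : x = 0 by lra.
move: xk; rewrite x0 => /round_cell0 ->.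
by rewrite (round_cell0 (nearest_int_cell (0 : R))) /tulap_upper oppr0 expr0z; field.
Qed.

Lemma tulap0_cdfN (x : R) : L (- x) = 1 - L x.
Proof.
have xk := nearest_int_cell x; have xNk := round_cellN xk.
case: (leP 0 x) => x0.
- rewrite (tulap0_cdfE_ge0 xk x0) (tulap0_cdfE_le0 xNk) ?oppr_le0 //.
  by rewrite /tulap_lower /tulap_upper opprK intrN; ring.
- rewrite (tulap0_cdfE_le0 xk (ltW x0)) (tulap0_cdfE_ge0 xNk) ?oppr_ge0 ?(ltW x0) //.
  by rewrite /tulap_lower /tulap_upper intrN opprK; ring.
Qed.

Let intrB1 (k : int) : (k - 1)%:~R = k%:~R - 1 :> R.
Proof. by rewrite intrB. Qed.

Let binv_ge1 : 1 <= b^-1.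
Proof. by rewrite invr_ge1 ?unitfE //; b_bounds; lra. Qed.

Let expz_antihomo (m n : int) : m <= n -> b ^ n <= b ^ m.
Proof.
have expz_inv k : b ^ k = b^-1 ^ (- k) by rewrite exprz_inv opprK.
by move=> mn; rewrite !expz_inv; apply: (ler_weXz2l binv_ge1); rewrite lerN2.
Qed.

Let upper_factor_bounds (x : R) k : round_cell x k ->
  b <= b + (k%:~R - x + 2^-1) * (1 - b) <= 1.
Proof.
b_bounds; move=> /andP[k1 k2].
have : 0 <= (k%:~R - x + 2^-1) * (1 - b) by apply: mulr_ge0; lra.
have : (k%:~R - x + 2^-1) * (1 - b) <= 1 * (1 - b) by apply: ler_wpM2r; lra.
by move=> ? ?; apply/andP; split; lra.
Qed.

Lemma tulap0_cdf_homo_ge0 (x y : R) : 0 <= x -> x <= y -> L x <= L y.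
Proof.
b_bounds; move=> x0 xy.
have xk := nearest_int_cell x; set k := nearest_int x in xk.
have yj := nearest_int_cell y; set j := nearest_int y in yj.
rewrite (tulap0_cdfE_ge0 xk x0) (tulap0_cdfE_ge0 yj) ?(le_trans x0 xy) // lerD2l lerN2.
have bk : 0 <= b ^ k / (1 + b) by apply: divr_ge0; [exact: exprz_ge0 (ltW b_gt0)|lra].
have bj : 0 <= b ^ j / (1 + b) by apply: divr_ge0; [exact: exprz_ge0 (ltW b_gt0)|lra].
have /andP[_ fy_le1] := upper_factor_bounds yj.
have /andP[fx_geb _] := upper_factor_bounds xk.
move: (xk) (yj) => /andP[k1 k2] /andP[j1 j2].
case: (ltgtP k j) => [kj|jk|kj]; rewrite /tulap_upper.
- have bjk : b ^ j <= b ^ k * b by rewrite -expzS; apply: expz_antihomo; rewrite lezD1.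
  apply: (le_trans (ler_wpM2l bj fy_le1)); rewrite mulr1.
  apply: le_trans (ler_wpM2l bk fx_geb); rewrite mulrAC.
  by apply: ler_wpM2r => //; rewrite invr_ge0; lra.
- have jk' : j%:~R + 1 <= k%:~R :> R by rewrite -intrD1 ler_int lezD1.
  have yx : y = x by lra.
  rewrite -/(tulap_upper y j) -/(tulap_upper x k) yx.
  by rewrite (tulap_upper_cell xk (_ : round_cell x j)) -?yx.
- rewrite kj; apply: ler_wpM2l => //; rewrite lerD2l.
  by apply: ler_wpM2r; lra.
Qed.

Lemma tulap0_cdf_homo : {homo L : x y / x <= y}.
Proof.
have homo_le0 u v : u <= v -> v <= 0 -> L u <= L v.
  move=> uv v0; rewrite -[u]opprK -[v]opprK (tulap0_cdfN (- u)) (tulap0_cdfN (- v)).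
  rewrite lerD2l lerN2.
  by apply: tulap0_cdf_homo_ge0; lra.
move=> x y xy; case: (leP 0 x) => x0; first exact: tulap0_cdf_homo_ge0.
case: (leP y 0) => y0; first exact: homo_le0.
by apply: (@le_trans _ _ (L 0)); [apply: homo_le0|apply: tulap0_cdf_homo_ge0]; lra.
Qed.

Definition tulap_gap (x : R) := b^-1 * L (x - 1) - L x.

Lemma tulap_gap_le_half (x : R) : x <= 2^-1 -> tulap_gap x = 0.
Proof.
b_bounds; move=> x_half; rewrite /tulap_gap; case: (leP x 0) => x0.
  have xk := nearest_int_cell x; set k := nearest_int x in xk.
  have x1_le0 : x - 1 <= 0 by lra.
  rewrite (tulap0_cdfE_le0 xk x0) (tulap0_cdfE_le0 (round_cellB1 xk) x1_le0).
  rewrite /tulap_lower (_ : - (k - 1) = - k + 1); last by ring.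
  by rewrite expzS intrB1; field; rewrite b1_neq0 b_neq0.
have x_cell0 : round_cell x 0 by apply/andP; split; lra.
have x1_cell : round_cell (x - 1) (0 - 1) by rewrite /round_cell intrB1; apply/andP; split; lra.
rewrite (tulap0_cdfE_ge0 x_cell0) ?(tulap0_cdfE_le0 x1_cell); [|lra|lra].
by rewrite /tulap_lower /tulap_upper intrB1 sub0r opprK expr0z expr1z; field; rewrite ?b1_neq0 ?b_neq0.
Qed.

Lemma tulap_gap_mid (x : R) : 2^-1 <= x <= 1 ->
  tulap_gap x = (x - 2^-1) * ((1 - b) * (b^-1 - b) / (1 + b)).
Proof.
b_bounds; move=> /andP[x1 x2].
have x_cell1 : round_cell x 1 by apply/andP; split; lra.
have x1_cell0 : round_cell (x - 1) 0 by apply/andP; split; lra.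
rewrite /tulap_gap (tulap0_cdfE_ge0 x_cell1) ?(tulap0_cdfE_le0 x1_cell0); [|lra|lra].
by rewrite /tulap_lower /tulap_upper oppr0 expr0z expr1z; field; rewrite ?b1_neq0 ?b_neq0.
Qed.

Lemma tulap_gap_ge1 (x : R) : 1 <= x ->
  tulap_gap x = b^-1 - 1 - (b^-1 - b) * (1 - L (x - 1)).
Proof.
move=> x1; have xk := nearest_int_cell x; set k := nearest_int x in xk.
rewrite /tulap_gap (tulap0_cdfE_ge0 xk) ?(tulap0_cdfE_ge0 (round_cellB1 xk)); [|lra|lra].
rewrite /tulap_upper -[in b ^ k](subrK 1 k) expzS intrB1.
by field; rewrite ?b1_neq0 ?b_neq0.
Qed.

Lemma tulap_gap_homo : {homo tulap_gap : x y / x <= y}.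
Proof.
b_bounds.
have homo_ge1 u v : 1 <= u -> u <= v -> tulap_gap u <= tulap_gap v.
  move=> u1 uv; rewrite !tulap_gap_ge1 ?(le_trans u1 uv) // lerD2l lerN2.
  apply: ler_wpM2l; first by have ? := binv_ge1; lra.
  by rewrite lerD2l lerN2 tulap0_cdf_homo // lerD2r.
have homo_mid u v : 2^-1 <= u -> u <= v -> v <= 1 -> tulap_gap u <= tulap_gap v.
  move=> u_half uv v1; rewrite !tulap_gap_mid; [|lra|lra].
  apply: ler_wpM2r; last lra.
  by have ? := binv_ge1; apply: divr_ge0; [apply: mulr_ge0|]; lra.
have homo_ge_half u v : 2^-1 <= u -> u <= v -> tulap_gap u <= tulap_gap v.
  move=> u_half uv; case: (leP v 1) => v1; first exact: homo_mid.
  case: (leP 1 u) => u1; first exact: homo_ge1.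
  by apply: (@le_trans _ _ (tulap_gap 1)); [apply: homo_mid|apply: homo_ge1]; lra.
move=> x y xy; case: (leP x 2^-1) => x_half; last exact: homo_ge_half (ltW x_half) xy.
rewrite tulap_gap_le_half // -(tulap_gap_le_half (lexx 2^-1)).
case: (leP y 2^-1) => y_half; first by rewrite !tulap_gap_le_half.
by apply: homo_ge_half; lra.
Qed.

Lemma tulap_gap_ge0 (x : R) : 0 <= tulap_gap x.
Proof.
case: (leP x 2^-1) => x_half; first by rewrite tulap_gap_le_half.
by rewrite -(tulap_gap_le_half (lexx 2^-1)) tulap_gap_homo // ltW.
Qed.

Lemma tulap0_cdf_le_shift (x : R) : L x <= b^-1 * L (x - 1).
Proof. by rewrite -subr_ge0; exact: tulap_gap_ge0. Qed.

End TulapCdf.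

Section TulapAffine.
Variables (R : realFieldType) (q : R).
Hypothesis q_lt1 : q < 1.

Definition tulap_affine (v : R) := (v - q / 2) / (1 - q).

Let q1_neq0 : 1 - q != 0. Proof. by rewrite subr_eq0 eq_sym lt_eqF. Qed.

Lemma tulap_affine_homo : {homo tulap_affine : v w / v <= w}.
Proof. by move=> v w vw; apply: ler_wpM2r; [rewrite invr_ge0; have ? := q_lt1; lra|lra]. Qed.

Lemma tulap_affineB (v w : R) : tulap_affine v - tulap_affine w = (v - w) / (1 - q).
Proof. by rewrite /tulap_affine; field. Qed.

Lemma tulap_affineM (B w : R) :
  tulap_affine (B * w) = B * tulap_affine w + (B - 1) * q / (2 * (1 - q)).
Proof. by rewrite /tulap_affine; field. Qed.

Lemma tulap_affineC (v : R) : tulap_affine (1 - v) = 1 - tulap_affine v.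
Proof. by rewrite /tulap_affine; field. Qed.

End TulapAffine.

Lemma tulap_cdfE (R : realType) (m : int) (b q x : R) : 0 <= q -> q < 1 ->
  tulap_cdf m%:~R b q x = clamp01 (tulap_affine q (tulap0_cdf 0 b (x - m%:~R))).
Proof.
move=> q0 q1; rewrite /tulap_cdf tulap0_cdf_shift /clamp01 /tulap_affine.
set v := tulap0_cdf 0 b _.
have q1_gt0 : 0 < 1 - q by lra.
have lt0E : ((v - q / 2) / (1 - q) < 0) = (v < q / 2).
  by rewrite pmulr_llt0 ?invr_gt0 // subr_lt0.
have gt1E : (1 < (v - q / 2) / (1 - q)) = (1 - q / 2 < v).
  by rewrite ltr_pdivlMr // mul1r; apply/idP/idP; lra.
rewrite lt0E gt1E.
case: (ltP v (q / 2)) => v_lo; case: (ltP (1 - q / 2) v) => v_hi /=;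
  rewrite ?addr0 ?add0r //; lra.
Qed.

Section TulapWitness.
Variables (R : realType) (b q d : R).
Hypotheses (b_gt0 : 0 < b) (b_lt1 : b < 1) (q_ge0 : 0 <= q) (q_lt1 : q < 1).
Hypothesis dE : d = (b^-1 - 1) * q / (2 * (1 - q)).

Local Notation L := (tulap0_cdf 0 b).
Local Notation F m := (tulap_cdf m%:~R b q).

Let binv_ge1 : 1 <= b^-1.
Proof. by rewrite invr_ge1 ?unitfE ?lt0r_neq0 //; have ? := b_lt1; lra. Qed.

Let d_ge0 : 0 <= d.
Proof.
rewrite dE; apply: divr_ge0; last by have ? := q_lt1; lra.
by apply: mulr_ge0 => //; have ? := binv_ge1; lra.
Qed.

Lemma tulap_cdf_homo (m : int) : {homo F m : x y / x <= y}.
Proof.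
move=> x y xy; rewrite !tulap_cdfE //.
by apply/clamp01_homo/tulap_affine_homo/tulap0_cdf_homo => //; rewrite lerD2r.
Qed.

Lemma tulap_cdf_itv (m : int) (x : R) : 0 <= F m x <= 1.
Proof. by rewrite tulap_cdfE // clamp01_itv. Qed.

Lemma tulap_cdfN (m : int) (x : R) : F m (- x) = 1 - F (- m) x.
Proof.
rewrite !tulap_cdfE // intrN opprK -opprD tulap0_cdfN //.
by rewrite (tulap_affineC q_lt1) clamp01C.
Qed.

Lemma tulap_dp_witness_succ (m : int) :
  dp_witness b^-1 d (F m) (F (m + 1)) (fun x => Num.min (F m x) d).
Proof.
split=> [x y xy|x|x y xy].
- by rewrite le_min !ge_min lexx orbT (tulap_cdf_homo _ xy).
- have /andP[F_ge0 _] := tulap_cdf_itv m x.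
  by rewrite le_min ge_min lexx orbT F_ge0 d_ge0.
rewrite !tulap_cdfE // intrD !opprD !addrA.
set x' := x - m%:~R; set y' := y - m%:~R.
have xy' : x' <= y' by rewrite lerD2r.
have A_homo u v : u <= v -> tulap_affine q (L u) <= tulap_affine q (L v).
  by move=> uv; apply/tulap_affine_homo/tulap0_cdf_homo.
apply: clamp01_min_homo => //; try by apply: A_homo; lra.
- rewrite dE -tulap_affineM //; apply/tulap_affine_homo => //.
  exact: tulap0_cdf_le_shift.
- rewrite !tulap_affineB // mulrA; apply: ler_wpM2r.
    by rewrite invr_ge0; have ? := q_lt1; lra.
  have := tulap_gap_homo b_gt0 b_lt1 xy'; rewrite /tulap_gap mulrBr; lra.
Qed.

Lemma tulap_dp_witness_pred (m : int) :
  dp_witness b^-1 d (F m) (F (m - 1)) (fun x => d - Num.min (F (- m) (- x)) d).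
Proof.
apply: (dp_witness_reflect (Phi := fun x => Num.min (F (- m) x) d)).
have reflectE k : (fun x => 1 - F k (- x)) = F (- k).
  by apply/funext => x; rewrite tulap_cdfN subKr.
by rewrite !reflectE opprB addrC; exact: tulap_dp_witness_succ.
Qed.

Lemma tulap_dp_witness (m m' : int) : `|m - m'| <= 1 -> right_continuous (F m) ->
  exists2 Phi, dp_witness b^-1 d (F m) (F m') Phi & right_continuous Phi.
Proof.
move=> mm' Frc.
have : m' = m \/ m' = m + 1 \/ m' = m - 1 by lia.
case=> [->|[->|->]].
- exists (fun=> 0); first by apply: dp_witness0 => //; exact: tulap_cdf_homo.
  by move=> x; exact: cvg_cst.
- exists (fun x => Num.min (F m x) d); first exact: tulap_dp_witness_succ.
  exact: right_continuous_comp (@continuous_minr _ d) Frc.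
- have g_cont : continuous (fun v : R => d - Num.min (1 - v) d).
    move=> v; apply: cvgB; first exact: cvg_cst.
    apply: (@continuous_cvg _ _ _ _ _ _ (fun u => Num.min u d)); first exact: continuous_minr.
    by apply: cvgB; [exact: cvg_cst|exact: cvg_id].
  exists ((fun v => d - Num.min (1 - v) d) \o F m); last exact: right_continuous_comp g_cont Frc.
  have -> : (fun v => d - Num.min (1 - v) d) \o F m = fun x => d - Num.min (F (- m) (- x)) d.
    by apply/funext => x; rewrite /= tulap_cdfN opprK.
  exact: tulap_dp_witness_pred.
Qed.

End TulapWitness.

Lemma tulap_q_spec (R : realFieldType) (b delta q : R) : 0 < b -> b < 1 -> 0 <= delta ->
  q = 2 * delta * b / (1 - b + 2 * delta * b) ->
  [/\ 0 <= q, q < 1 & delta = (b^-1 - 1) * q / (2 * (1 - q))].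
Proof.
move=> b_gt0 b_lt1 delta_ge0 ->.
have db_ge0 : 0 <= delta * b by apply: mulr_ge0 => //; exact: ltW.
have den_gt0 : 0 < 1 - b + 2 * delta * b by lra.
split; first by apply: divr_ge0; lra.
  by rewrite ltr_pdivrMr // mul1r; lra.
have -> : 1 - 2 * delta * b / (1 - b + 2 * delta * b) = (1 - b) / (1 - b + 2 * delta * b).
  by field; rewrite gt_eqF.
by field; apply/and3P; split; apply/eqP => h; lra.
Qed.

Unset Implicit Arguments. Set Strict Implicit.

Theorem theorem2 (R : realType) (eps delta : R) (n : nat) (Xs : Type)
    (T : ('I_n -> Xs) -> int)
    (P : ('I_n -> Xs) -> probability R R) :
  0 < eps -> 0 <= delta -> (1 <= n)%N ->
  ereal_sup ((fun p : ('I_n -> Xs) * ('I_n -> Xs) =>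
                 ((`|T p.1 - T p.2|%:~R : R)%:E))
              @` [set p | hamming p.1 p.2 = 1%N]) = 1%E ->
  (forall (X : 'I_n -> Xs) (x : R),
     P X `]-oo, x]%classic =
       (tulap_cdf (T X)%:~R (expR (- eps))
          (2 * delta * expR (- eps) / (1 - expR (- eps) + 2 * delta * expR (- eps))) x)%:E) ->
  diff_private eps delta P.
Proof.
move=> eps_gt0 delta_ge0 _ T_sensitivity P_tulap A mA X X' XX'.
set b := expR (- eps) in P_tulap; set q := _ / _ in P_tulap.
have b_gt0 : 0 < b := expR_gt0 _.
have b_lt1 : b < 1 by rewrite expR_lt1 oppr_lt0.
have [q_ge0 q_lt1 deltaE] := tulap_q_spec b_gt0 b_lt1 delta_ge0 (erefl q).
have TXX' : `|T X - T X'| <= 1.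
  have : ((`|T X - T X'|%:~R : R)%:E <= 1)%E.
    by rewrite -T_sensitivity; apply: ereal_sup_ubound; exists (X, X').
  by rewrite lee_fin -[1 : R]/(1%:~R) ler_int.
have [Phi Phi_witness Phi_rc] := tulap_dp_witness b_gt0 b_lt1 q_ge0 q_lt1 deltaE TXX'
  (probability_cdf_right_continuous (P_tulap X)).
have binv_ge0 : 0 <= b^-1 by rewrite invr_ge0 ltW.
rewrite (_ : expR eps = b^-1); last by rewrite /b expRN invrK.
exact: le_dp_of_witness binv_ge0 (P_tulap X) (P_tulap X') Phi_rc Phi_witness A mA.
Qed.
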